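(* Let $c>0$ and let $\{\alpha_t\}_{t\ge1}$ be a sequence of nonnegative reals with $c\alpha_t/4\le1$ for all $t$. Consider the sequences defined by $$\theta_{t+1}=\theta_t+\alpha_t\frac{1}{1+\exp(c\theta_t)},\qquad \theta'_{t+1}=\theta'_t+\alpha_t\frac{1}{1+\exp(c\theta'_t)}.$$ If $\theta_1-\theta'_1\ge0$, then for every $t\ge1$, $$\theta_t-\theta'_t\ge(\theta_1-\theta'_1)\prod_{i=1}^{t-1}\Big(1-\frac{c\alpha_i}{4}\Big).$$ *)

From Stdlib Require Import Reals Lra.
Open Scope R_scope.

Fixpoint prod_from1 (f : nat -> R) (n : nat) : R :=
  match n with
  | O => 1
  | S m => prod_from1 f m * f (S m)
  end.

(** The map [x |-> x + a g x], with [g x = 1 / (1 + exp (c x))], has derivative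
    [1 + a g'(x) >= 1 - c a / 4], because [|g'| = c e / (1 + e)^2 <= c / 4]
    with [e = exp (c x)] (AM-GM: [4 e <= (1 + e)^2]).  One step of the
    recursion therefore shrinks a nonnegative gap [theta - theta'] by at most
    the factor [1 - c a / 4]; since this factor is nonnegative the gap stays
    nonnegative, and induction on [t] multiplies the factors. *)

From Stdlib Require Import Reals Lra Lia.
From Coquelicot Require Import Coquelicot.
Open Scope R_scope.

Lemma prod_from1_nonneg (f : nat -> R) (n : nat) :
  (forall i, (1 <= i <= n)%nat -> 0 <= f i) -> 0 <= prod_from1 f n.
Proof.
  induction n as [|n IHn]; intros hf; simpl; [lra|].
  apply Rmult_le_pos; [apply IHn; intros i hi|]; apply hf; lia.
Qed.

Lemma le_of_derive_nonneg (f df : R -> R) (a b : R) : a <= b ->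
  (forall z, a <= z <= b -> derivable_pt_lim f z (df z)) ->
  (forall z, a <= z <= b -> 0 <= df z) ->
  f a <= f b.
Proof.
  intros hab hd hpos.
  destruct (Req_dec a b) as [<-|hne]; [lra|].
  destruct (MVT_cor2 f df a b ltac:(lra) hd) as [z [hz hzab]].
  assert (0 <= df z * (b - a)) by (apply Rmult_le_pos; [apply hpos|]; lra).
  lra.
Qed.

Section Logistic.

Variable c : R.
Hypothesis hc : 0 < c.

Definition logistic (x : R) : R := 1 / (1 + exp (c * x)).

Lemma logistic_slope_le (z : R) :
  c * exp (c * z) / (1 + exp (c * z)) ^ 2 <= c / 4.
Proof.
  set (e := exp (c * z)).
  assert (he : 0 < e) by apply exp_pos.
  assert (amgm : 4 * e <= (1 + e) ^ 2) by (pose proof (pow2_ge_0 (e - 1)); nra).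
  apply Rmult_le_reg_r with ((1 + e) ^ 2); [nra|].
  unfold Rdiv. rewrite Rmult_assoc, Rinv_l by nra.
  nra.
Qed.

Lemma logistic_sub_ge (x y : R) : y <= x ->
  - (c / 4) * (x - y) <= logistic x - logistic y.
Proof.
  intros hxy.
  set (h := fun z => logistic z + c / 4 * z).
  assert (h y <= h x); [|unfold h in *; lra].
  apply le_of_derive_nonneg with
    (df := fun z => c / 4 - c * exp (c * z) / (1 + exp (c * z)) ^ 2); [lra| |].
  - intros z _. apply is_derive_Reals. unfold h, logistic.
    assert (0 < exp (c * z)) by apply exp_pos.
    auto_derive; [lra|field; lra].
  - intros z _. pose proof (logistic_slope_le z). lra.
Qed.

Lemma logistic_step_gap_ge (a x y : R) :
  0 <= a -> y <= x ->
  (1 - c * a / 4) * (x - y) <= (x + a * logistic x) - (y + a * logistic y).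
Proof.
  intros ha hxy.
  pose proof (logistic_sub_ge x y hxy) as hsub.
  assert (a * (- (c / 4) * (x - y)) <= a * (logistic x - logistic y))
    by (apply Rmult_le_compat_l; lra).
  lra.
Qed.

End Logistic.

Theorem lemmaA3 (c : R) (alpha theta theta' : nat -> R)
  (hc : 0 < c)
  (halpha_nonneg : forall t : nat, (1 <= t)%nat -> 0 <= alpha t)
  (halpha_small : forall t : nat, (1 <= t)%nat -> c * alpha t / 4 <= 1)
  (htheta : forall t : nat, (1 <= t)%nat ->
     theta (S t) = theta t + alpha t * (1 / (1 + exp (c * theta t))))
  (htheta' : forall t : nat, (1 <= t)%nat ->
     theta' (S t) = theta' t + alpha t * (1 / (1 + exp (c * theta' t))))
  (hinit : 0 <= theta 1%nat - theta' 1%nat) :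
  forall t : nat, (1 <= t)%nat ->
    theta t - theta' t >=
      (theta 1%nat - theta' 1%nat)
        * prod_from1 (fun i => 1 - c * alpha i / 4) (t - 1).
Proof.
  set (factor := fun i => 1 - c * alpha i / 4).
  assert (hfactor : forall i, (1 <= i)%nat -> 0 <= factor i).
  { intros i hi. pose proof (halpha_small i hi). unfold factor. lra. }
  assert (hgap : forall n, (theta 1%nat - theta' 1%nat) * prod_from1 factor n
                           <= theta (S n) - theta' (S n)).
  { induction n as [|n IHn]; simpl; [lra|].
    assert (hprod : 0 <= prod_from1 factor n)
      by (apply prod_from1_nonneg; intros i hi; apply hfactor; lia).
    assert (hnext := hfactor (S n) ltac:(lia)).
    assert (hstep := logistic_step_gap_ge c hc (alpha (S n)) (theta (S n)) (theta' (S n))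
                       (halpha_nonneg (S n) ltac:(lia)) ltac:(nra)).
    rewrite (htheta (S n)), (htheta' (S n)) by lia.
    unfold logistic, factor in *.
    nra. }
  intros [|t] ht; [lia|].
  replace (S t - 1)%nat with t by lia.
  apply Rle_ge, hgap.
Qed.
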